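(* For all integers $n\ge1$ and $i\ge1$, $[a_n,e_i^{-1}]\in\mathcal A$, and $$[a_n,e_i^{-1}]\equiv a_{n+i}(\bar n)\pmod{t^{n+i+1}},$$ where $\bar n\in\{0,1\}$ with $\bar n\equiv n\pmod 2$; that is, $[a_n,e_i^{-1}]=(g,t)$ with $g\equiv 1+\bar n\,t^{n+i}\pmod{t^{n+i+1}}$.
   Context: Work in the Riordan group $\mathcal R(\mathbb F_2)$ of pairs $(g,f)$ of formal power series over $\mathbb F_2$ with $g=1+\cdots$, $f=t+\cdots$, with product $(g_1,f_1)(g_2,f_2)=(g_1\cdot(g_2\circ f_1),\,f_2\circ f_1)$. $\mathcal A=\{(g,t)\}$ is the Appell subgroup. For $k\ge1$, $a_k(\beta)=(1+\beta t^k,t)$ for $\beta\in\mathbb F_2$, $a_k=a_k(1)$, and $e_i=(1,t+t^{i+1})$. The commutator is $[x,y]=x^{-1}y^{-1}xy$. *)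

From mathcomp Require Import all_boot all_algebra.
From Stdlib Require Import ClassicalEpsilon.

Set Implicit Arguments.
Unset Strict Implicit.
Unset Printing Implicit Defensive.
Import GRing.Theory.
Local Open Scope ring_scope.

Definition F2 : Type := 'F_2.

(* formal power series: n |-> coefficient of t^n *)
Definition fps := nat -> F2.

Definition ps_one : fps := fun n => if n == 0%N then 1 else 0.
Definition ps_monom (k : nat) (c : F2) : fps := fun n => if n == k then c else 0.
Definition ps_t : fps := ps_monom 1 1.
Definition ps_add (f g : fps) : fps := fun n => f n + g n.
Definition ps_mul (f g : fps) : fps :=
  fun n => \sum_(k < n.+1) f k * g (n - k)%N.
Definition ps_pow (f : fps) (k : nat) : fps := iter k (ps_mul f) ps_one.
(* composition g o f, meaningful when f has zero constant term *)
Definition ps_comp (g f : fps) : fps :=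
  fun n => \sum_(k < n.+1) g k * ps_pow f k n.

Definition riordan := (fps * fps)%type.
Definition is_riordan (x : riordan) : Prop :=
  x.1 0%N = 1 /\ x.2 0%N = 0 /\ x.2 1%N = 1.

Definition rmul (x y : riordan) : riordan :=
  (ps_mul x.1 (ps_comp y.1 x.2), ps_comp y.2 x.2).
Definition rone : riordan := (ps_one, ps_t).

Definition rinv (x : riordan) : riordan :=
  epsilon (inhabits rone)
    (fun y => is_riordan y /\ rmul x y = rone /\ rmul y x = rone).

Definition rcomm (x y : riordan) : riordan :=
  rmul (rmul (rmul (rinv x) (rinv y)) x) y.

Definition in_appell (x : riordan) : Prop := is_riordan x /\ x.2 = ps_t.

Definition a_ (k : nat) (beta : F2) : riordan := (ps_add ps_one (ps_monom k beta), ps_t).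
Definition e_ (i : nat) : riordan := (ps_one, ps_add ps_t (ps_monom i.+1 1)).

(* Writing u = 1 + t^n and f = t + t^(i+1), a direct computation in the Riordan
   group gives [(u, t), (1, f)^-1] = (u^-1 (u o f), t), an Appell element.
   Modulo t^(n+i+1) one has u o f = 1 + t^n (1 + t^i)^n = 1 + t^n + n t^(n+i), and
   since u^-1 = 1 mod t, u^-1 (u o f) = 1 + n t^(n+i).  Power-series identities are
   checked on truncations, which are polynomials; the inverse of (1, f) exists
   because f has a compositional inverse, built coefficient by coefficient. *)

From mathcomp Require Import all_boot all_algebra zify ring.
From Stdlib Require Import ClassicalEpsilon FunctionalExtensionality.
Import GRing.Theory.
Local Open Scope ring_scope.

Section Agree.
Context {R : comNzRingType}.
Implicit Types p q : {poly R}.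

Definition agree N p q := forall m, (m < N)%N -> p`_m = q`_m.

Lemma agree_refl N p : agree N p p. Proof. by []. Qed.

Lemma agree_sym {N p q} : agree N p q -> agree N q p.
Proof. by move=> pq m lt_mN; rewrite pq. Qed.

Lemma agree_trans {N q p r} : agree N p q -> agree N q r -> agree N p r.
Proof. by move=> pq qr m lt_mN; rewrite pq // qr. Qed.

Lemma agreeD {N p p' q q'} : agree N p p' -> agree N q q' -> agree N (p + q) (p' + q').
Proof. by move=> pp' qq' m lt_mN; rewrite !coefD pp' // qq'. Qed.

Lemma agreeZ {N p q} c : agree N p q -> agree N (c *: p) (c *: q).
Proof. by move=> pq m lt_mN; rewrite !coefZ pq. Qed.

Lemma agreeM {N p p' q q'} : agree N p p' -> agree N q q' -> agree N (p * q) (p' * q').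
Proof.
move=> pp' qq' m lt_mN; rewrite !coefM; apply: eq_bigr => [[k /= lt_km]] _.
by rewrite pp' ?qq' //; lia.
Qed.

Lemma agreeX {N p q} k : agree N p q -> agree N (p ^+ k) (q ^+ k).
Proof.
by move=> pq; elim: k => [|k IHk]; rewrite ?expr0 // !exprS; apply: agreeM.
Qed.

Lemma agree_mulXn {N} n {p q} : agree N p q -> agree (n + N) ('X^n * p) ('X^n * q).
Proof. by move=> pq m lt_mnN; rewrite !coefXnM; case: ltnP => // le_nm; apply: pq; lia. Qed.

Lemma coef_expr_lt p k m : p`_0 = 0 -> (m < k)%N -> (p ^+ k)`_m = 0.
Proof.
move=> p0; elim: k m => [//|k IHk] m lt_mk.
rewrite exprS coefM big_ord_recl p0 mul0r add0r big1 // => j _.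
by rewrite IHk ?mulr0 //=; have := ltn_ord j; rewrite /bump /=; lia.
Qed.

Lemma coef_expr_diag p k : p`_0 = 0 -> p`_1 = 1 -> (p ^+ k)`_k = 1.
Proof.
move=> p0 p1; elim: k => [|k IHk]; first by rewrite expr0 coef1.
rewrite exprS coefM big_ord_recl p0 mul0r add0r big_ord_recl /= p1 mul1r.
rewrite /bump /= subSS subn0 IHk big1 ?addr0 // => j _.
by rewrite coef_expr_lt ?mulr0 //; have := ltn_ord j; rewrite /bump /=; lia.
Qed.

Lemma coef_comp_poly_ord p q m : q`_0 = 0 ->
  (p \Po q)`_m = \sum_(k < m.+1) p`_k * (q ^+ k)`_m.
Proof.
move=> q0; rewrite coef_comp_poly.
pose F k := p`_k * (q ^+ k)`_m.
have [le_pm|lt_mp] := leqP (size p) m.+1.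
  rewrite (big_ord_widen _ F le_pm) big_mkcond /=.
  by apply: eq_bigr => k _; rewrite /F; case: ltnP => // /(nth_default 0) ->; rewrite mul0r.
rewrite [RHS](big_ord_widen _ F (ltnW lt_mp)) [RHS]big_mkcond /=.
by apply: eq_bigr => k _; rewrite /F; case: ltnP => // lt_mk; rewrite coef_expr_lt ?mulr0.
Qed.

Lemma agree_comp {N p p' q q'} : agree N p p' -> agree N q q' -> q`_0 = 0 ->
  agree N (p \Po q) (p' \Po q').
Proof.
move=> pp' qq' q0 m lt_mN.
have q'0 : q'`_0 = 0 by rewrite -qq' //; lia.
rewrite !coef_comp_poly_ord //; apply: eq_bigr => [[k /= lt_km]] _.
by rewrite (agreeX k qq' m lt_mN) pp' //; lia.
Qed.

Lemma agree_exp1Xn i k : (0 < i)%N ->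
  agree i.+1 ((1 + 'X^i) ^+ k) (1 + k%:R *: 'X^i).
Proof.
move=> i_gt0; elim: k => [|k IHk]; first by rewrite expr0 scale0r addr0.
rewrite exprS; apply: agree_trans (agreeM (agree_refl _ _) IHk) _.
have -> : (1 + 'X^i) * (1 + k%:R *: 'X^i) =
          1 + (k.+1%:R : R) *: 'X^i + (k%:R *: 'X^i) * 'X^i.
  by rewrite mulrSr scalerDl scale1r; ring.
move=> m lt_mi; rewrite coefD -scalerAl coefZ -exprD coefXn.
by rewrite (_ : (m == i + i)%N = false) ?mulr0 ?addr0 //; apply/negbTE; lia.
Qed.

Lemma agree_inv1Xn_comp n i (V : {poly R}) : (0 < i)%N -> V`_0 = 1 ->
  agree (n + i).+1 (V * (1 + 'X^n)) 1 ->
  agree (n + i).+1 (V * ((1 + 'X^n) \Po ('X + 'X^(i.+1)))) (1 + n%:R *: 'X^(n + i)).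
Proof.
move=> i_gt0 V0 V_inv.
have -> : (1 + 'X^n : {poly R}) \Po ('X + 'X^(i.+1)) = 1 + 'X^n * (1 + 'X^i) ^+ n.
  rewrite comp_polyD -polyC1 comp_polyC comp_Xn_poly exprS -exprMn.
  by congr (_ + (_ ^+ _)); ring.
have binom : agree (n + i).+1 ('X^n * (1 + 'X^i) ^+ n) ('X^n * (1 + n%:R *: 'X^i)).
  by rewrite -addnS; apply/agree_mulXn/agree_exp1Xn.
have shift : agree (n + i).+1 ('X^(n + i) * V) 'X^(n + i).
  rewrite -[X in agree _ _ X]mulr1 -addn1; apply: agree_mulXn => m.
  by rewrite ltnS leqn0 => /eqP->; rewrite coef1.
apply: agree_trans (agreeM (agree_refl _ V) (agreeD (agree_refl _ 1) binom)) _.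
have -> : V * (1 + 'X^n * (1 + n%:R *: 'X^i)) = V * (1 + 'X^n) + n%:R *: ('X^(n + i) * V).
  by rewrite -!mul_polyC exprD; ring.
exact: agreeD V_inv (agreeZ _ shift).
Qed.

End Agree.

Definition trunc N (f : fps) : {poly F2} := \poly_(j < N) f j.

Lemma coef_trunc N f m : (m < N)%N -> (trunc N f)`_m = f m.
Proof. by move=> lt_mN; rewrite coef_poly lt_mN. Qed.

Lemma trunc_coef0 N f : f 0%N = 0 -> (trunc N f)`_0 = 0.
Proof. by move=> f0; rewrite coef_poly; case: ifP. Qed.

Lemma fps_ext (f g : fps) : (forall N, agree N (trunc N f) (trunc N g)) -> f = g.
Proof.
move=> fg; apply: functional_extensionality => m.
by have := fg m.+1 m (ltnSn m); rewrite !coef_trunc.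
Qed.

Lemma trunc_one N : agree N (trunc N ps_one) 1.
Proof. by move=> m lt_mN; rewrite coef_trunc // coef1 /ps_one; case: eqP. Qed.

Lemma trunc_monom N k c : agree N (trunc N (ps_monom k c)) (c *: 'X^k).
Proof.
move=> m lt_mN; rewrite coef_trunc // coefZ coefXn /ps_monom.
by case: eqP; rewrite ?mulr1 ?mulr0.
Qed.

Lemma trunc_t N : agree N (trunc N ps_t) 'X.
Proof. by move=> m lt_mN; rewrite trunc_monom // scale1r. Qed.

Lemma trunc_add N f g : agree N (trunc N (ps_add f g)) (trunc N f + trunc N g).
Proof. by move=> m lt_mN; rewrite coefD !coef_trunc. Qed.

Lemma trunc_mul N f g : agree N (trunc N (ps_mul f g)) (trunc N f * trunc N g).
Proof.
move=> m lt_mN; rewrite coef_trunc // coefM; apply: eq_bigr => [[k /= lt_km]] _.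
by rewrite !coef_trunc //; lia.
Qed.

Lemma trunc_pow N f k : agree N (trunc N (ps_pow f k)) (trunc N f ^+ k).
Proof.
elim: k => [|k IHk]; first exact: trunc_one.
rewrite exprS; apply: agree_trans (trunc_mul _ _ _) _.
exact: agreeM (agree_refl _ _) IHk.
Qed.

Lemma trunc_comp N g f : f 0%N = 0 ->
  agree N (trunc N (ps_comp g f)) (trunc N g \Po trunc N f).
Proof.
move=> f0 m lt_mN; rewrite coef_trunc // coef_comp_poly_ord ?trunc_coef0 //.
apply: eq_bigr => [[k /= lt_km]] _.
by rewrite coef_trunc; last lia; rewrite -(trunc_pow N f k m lt_mN) coef_trunc.
Qed.

Lemma ps_mulA f g h : ps_mul f (ps_mul g h) = ps_mul (ps_mul f g) h.
Proof.
apply: fps_ext => N; apply: agree_trans (trunc_mul _ _ _) _.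
apply: agree_trans (agreeM (agree_refl _ _) (trunc_mul _ _ _)) _.
rewrite mulrA; apply: agree_sym; apply: agree_trans (trunc_mul _ _ _) _.
exact: agreeM (trunc_mul _ _ _) (agree_refl _ _).
Qed.

Lemma ps_mulC f g : ps_mul f g = ps_mul g f.
Proof.
apply: fps_ext => N; apply: agree_trans (trunc_mul _ _ _) _.
by rewrite mulrC; apply: agree_sym; apply: trunc_mul.
Qed.

Lemma ps_mul1l f : ps_mul ps_one f = f.
Proof.
apply: fps_ext => N; apply: agree_trans (trunc_mul _ _ _) _.
by rewrite -[X in agree _ _ X]mul1r; apply: agreeM (trunc_one _) (agree_refl _ _).
Qed.

Lemma ps_mul1r f : ps_mul f ps_one = f.
Proof. by rewrite ps_mulC ps_mul1l. Qed.

Lemma coef0_ps_comp {g} f : g 0%N = 0 -> ps_comp g f 0%N = 0.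
Proof. by move=> g0; rewrite /ps_comp big_ord1 g0 mul0r. Qed.

Lemma ps_comp1 f : ps_comp ps_one f = ps_one.
Proof.
apply: functional_extensionality => m.
rewrite /ps_comp big_ord_recl big1 ?addr0 => [|k _]; last by rewrite mul0r.
by rewrite mul1r.
Qed.

Lemma ps_comp_tr g : ps_comp g ps_t = g.
Proof.
apply: fps_ext => N; apply: agree_trans (trunc_comp _ _ _ (erefl _)) _.
rewrite -[X in agree _ _ X]comp_polyXr.
exact: agree_comp (agree_refl _ _) (trunc_t _) (trunc_coef0 _ _ (erefl _)).
Qed.

Lemma ps_comp_tl f : f 0%N = 0 -> ps_comp ps_t f = f.
Proof.
move=> f0; apply: fps_ext => N; apply: agree_trans (trunc_comp _ _ _ f0) _.
rewrite -[X in agree _ _ X]comp_polyX.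
exact: agree_comp (trunc_t _) (agree_refl _ _) (trunc_coef0 _ _ f0).
Qed.

Lemma ps_compA h g f : f 0%N = 0 -> g 0%N = 0 ->
  ps_comp h (ps_comp g f) = ps_comp (ps_comp h g) f.
Proof.
move=> f0 g0; have gf0 := coef0_ps_comp f g0.
apply: fps_ext => N; apply: agree_trans (trunc_comp _ _ _ gf0) _.
apply: agree_trans
  (agree_comp (agree_refl _ _) (trunc_comp _ _ _ f0) (trunc_coef0 _ _ gf0)) _.
rewrite comp_polyA; apply: agree_sym; apply: agree_trans (trunc_comp _ _ _ f0) _.
exact: agree_comp (trunc_comp _ _ _ g0) (agree_refl _ _) (trunc_coef0 _ _ f0).
Qed.

Lemma ps_compM g h f : f 0%N = 0 ->
  ps_comp (ps_mul g h) f = ps_mul (ps_comp g f) (ps_comp h f).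
Proof.
move=> f0; apply: fps_ext => N; apply: agree_trans (trunc_comp _ _ _ f0) _.
apply: agree_trans (agree_comp (trunc_mul _ _ _) (agree_refl _ _) (trunc_coef0 _ _ f0)) _.
rewrite comp_polyM; apply: agree_sym; apply: agree_trans (trunc_mul _ _ _) _.
exact: agreeM (trunc_comp _ _ _ f0) (trunc_comp _ _ _ f0).
Qed.

Lemma rmulA x y z : x.2 0%N = 0 -> y.2 0%N = 0 ->
  rmul (rmul x y) z = rmul x (rmul y z).
Proof.
case: x y z => [x1 x2] [y1 y2] [z1 z2] /= x0 y0.
by rewrite /rmul /= ps_compM // -!ps_compA // ps_mulA.
Qed.

Lemma rmul1l x : rmul rone x = x.
Proof. by case: x => x1 x2; rewrite /rmul /= !ps_comp_tr ps_mul1l. Qed.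

Lemma rmul1r x : x.2 0%N = 0 -> rmul x rone = x.
Proof. by case: x => x1 x2 /= x0; rewrite /rmul /= ps_comp1 ps_mul1r ps_comp_tl. Qed.

Lemma rinv_spec x : (exists y, is_riordan y /\ rmul x y = rone /\ rmul y x = rone) ->
  is_riordan (rinv x) /\ rmul x (rinv x) = rone /\ rmul (rinv x) x = rone.
Proof. exact: epsilon_spec. Qed.

Lemma rinv_uniq x y : is_riordan x -> is_riordan y ->
  rmul x y = rone -> rmul y x = rone -> rinv x = y.
Proof.
move=> [_ [x0 _]] y_riordan xy yx.
have [[_ [x'0 _]] [_ x'x]] := rinv_spec x (ex_intro _ y (conj y_riordan (conj xy yx))).
by rewrite -(rmul1r _ x'0) -xy -rmulA // x'x rmul1l.
Qed.

Section CompositionalInverse.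
Variable f : fps.
Hypotheses (f0 : f 0%N = 0) (f1 : f 1%N = 1).

(* Since (f^k)_k = 1 and (f^k)_m = 0 for m < k, adding c t^k to p changes the
   coefficient k of p o f by c and leaves the lower ones alone; c makes it that of t. *)
Fixpoint cinv_poly (N : nat) : {poly F2} :=
  if N is N'.+1 then
    let p := cinv_poly N' in p + ((N' == 1)%:R - (p \Po trunc N f)`_N') *: 'X^N'
  else 0.

Lemma cinv_polyD N k : agree N (cinv_poly (N + k)) (cinv_poly N).
Proof.
elim: k => [|k IHk] m lt_mN; first by rewrite addn0.
rewrite addnS /= coefD coefZ coefXn (_ : (m == N + k)%N = false) ?mulr0 ?addr0 ?IHk //.
by apply/negbTE; lia.
Qed.

Lemma cinv_poly_comp N : agree N (cinv_poly N \Po trunc N f) 'X.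
Proof.
elim: N => [//|N IHN] m lt_mN.
have F0 : (trunc N.+1 f)`_0 = 0 by apply: trunc_coef0.
have F1 : (0 < N)%N -> (trunc N.+1 f)`_1 = 1 by move=> N_gt0; rewrite coef_trunc.
rewrite /= comp_polyD comp_polyZ comp_Xn_poly coefD coefZ.
have [lt_mN'|ge_mN] := ltnP m N.
  rewrite coef_expr_lt // mulr0 addr0 -IHN //.
  apply: agree_comp (agree_refl _ _) _ F0 _ lt_mN' => j lt_jN.
  by rewrite !coef_trunc //; lia.
have -> : m = N by lia.
case: N F0 F1 {IHN lt_mN ge_mN} => [|[|N]] F0 F1.
- by rewrite expr0 coef1 mulr1 addrC subrK coefX.
- by rewrite expr1 F1 // mulr1 addrC subrK coefX.
by rewrite coef_expr_diag ?F1 // mulr1 addrC subrK coefX.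
Qed.

Definition cinv : fps := fun m => (cinv_poly m.+1)`_m.

Lemma trunc_cinv N : agree N (trunc N cinv) (cinv_poly N).
Proof.
by move=> m lt_mN; rewrite coef_trunc // /cinv -(subnKC lt_mN) cinv_polyD.
Qed.

Lemma ps_comp_cinv_l : ps_comp cinv f = ps_t.
Proof.
apply: fps_ext => N; apply: agree_trans (trunc_comp _ _ _ f0) _.
apply: agree_trans (agree_comp (trunc_cinv N) (agree_refl _ _) (trunc_coef0 _ _ f0)) _.
by apply: agree_trans (cinv_poly_comp N) _; apply: agree_sym; apply: trunc_t.
Qed.

Lemma cinv0 : cinv 0%N = 0.
Proof. by rewrite /cinv /= comp_poly0 coef0 subr0 scale0r addr0 coef0. Qed.

Lemma cinv1 : cinv 1%N = 1.
Proof.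
by rewrite /cinv /= !(comp_poly0, coef0, oppr0, subr0, scale0r, addr0, add0r) scale1r coefX.
Qed.

End CompositionalInverse.

Lemma ps_comp_cinv_r f : f 0%N = 0 -> f 1%N = 1 -> ps_comp f (cinv f) = ps_t.
Proof.
move=> f0 f1; have cinv_cinv : cinv (cinv f) = f.
  rewrite -[RHS](ps_comp_tl _ f0) -(ps_comp_cinv_l _ (cinv0 f) (cinv1 f)).
  by rewrite -ps_compA ?cinv0 // ps_comp_cinv_l // ps_comp_tr.
by rewrite -{1}cinv_cinv ps_comp_cinv_l ?cinv0 ?cinv1.
Qed.

Lemma riordan_lagrange_invertible {f} : f 0%N = 0 -> f 1%N = 1 ->
  exists y, is_riordan y /\ rmul (ps_one, f) y = rone /\ rmul y (ps_one, f) = rone.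
Proof.
move=> f0 f1; exists (ps_one, cinv f).
split; first by split; [|split; [apply: cinv0|apply: cinv1]].
by rewrite /rmul /rone /= !ps_comp1 ps_mul1l ps_comp_cinv_l // ps_comp_cinv_r.
Qed.

Lemma rcomm_appell_lagrange u v f :
  u 0%N = 1 -> v 0%N = 1 -> ps_mul u v = ps_one -> f 0%N = 0 -> f 1%N = 1 ->
  rcomm (u, ps_t) (rinv (ps_one, f)) = (ps_mul v (ps_comp u f), ps_t).
Proof.
move=> u0 v0 uv f0 f1.
have [y_riordan [ey ye]] := rinv_spec _ (riordan_lagrange_invertible f0 f1).
have rinv_y : rinv (rinv (ps_one, f)) = (ps_one, f) by apply: rinv_uniq.
have rinv_u : rinv (u, ps_t) = (v, ps_t).
  by apply: rinv_uniq; rewrite /rmul /= ?ps_comp_tr // ?(ps_mulC v) uv.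
rewrite /rcomm rinv_y rinv_u; case: (rinv _) ey => g h.
rewrite /rmul /= ps_comp1 ps_mul1l ps_mul1r !ps_comp_tr ps_comp_tl // => -[gf1 ->].
by rewrite gf1 ps_mul1r.
Qed.

Lemma coef0_a k c : (0 < k)%N -> (a_ k c).1 0%N = 1.
Proof. by case: k => // k _; rewrite /= /ps_add addr0. Qed.

Lemma coef0_e i : (e_ i).2 0%N = 0.
Proof. by rewrite /= /ps_add addr0. Qed.

Lemma coef1_e i : (0 < i)%N -> (e_ i).2 1%N = 1.
Proof. by case: i => // i _; rewrite /= /ps_add addr0. Qed.

Lemma trunc_a N k c : agree N (trunc N (a_ k c).1) (1 + c *: 'X^k).
Proof. exact: agree_trans (trunc_add _ _ _) (agreeD (trunc_one _) (trunc_monom _ _ _)). Qed.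

Lemma trunc_e N i : agree N (trunc N (e_ i).2) ('X + 'X^(i.+1)).
Proof.
rewrite -[X in _ + X]scale1r.
exact: agree_trans (trunc_add _ _ _) (agreeD (trunc_t _) (trunc_monom _ _ _)).
Qed.

(* Over F_2, 1 + t^n = 1 - t^n, whose inverse is the geometric series in t^n. *)
Definition ps_geom n : fps := fun m => if (n %| m)%N then 1 else 0.

Lemma ps_mul_geom n : (0 < n)%N -> ps_mul (a_ n 1).1 (ps_geom n) = ps_one.
Proof.
move=> n_gt0; apply: fps_ext => N; apply: agree_trans (trunc_mul _ _ _) _.
apply: agree_trans (agreeM (trunc_a _ _ _) (agree_refl _ _)) _.
move=> m lt_mN; rewrite scale1r mulrDl mul1r coefD coefXnM (trunc_one _ _ lt_mN) coef1.
rewrite coef_trunc // /ps_geom; case: ltnP => [lt_mn|le_nm].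
  rewrite addr0; case: m {lt_mN} lt_mn => [|m] lt_mn; first by rewrite dvdn0.
  by rewrite (_ : (n %| m.+1)%N = false) //; apply/negbTE/negP => /dvdn_leq; lia.
rewrite coef_trunc; last lia.
rewrite dvdn_subl // (_ : (m == 0)%N = false); last by apply/negbTE; lia.
by case: (n %| m)%N; apply/eqP.
Qed.

Lemma natr_F2 k : (k%:R : F2) = (odd k)%:R.
Proof. by rewrite -(GRing.natr_mod_pchar (pchar_Fp (isT : prime 2))) modn2. Qed.

Lemma commutator_coef {n i} : (0 < n)%N -> (0 < i)%N -> forall m, (m <= n + i)%N ->
  ps_mul (ps_geom n) (ps_comp (a_ n 1).1 (e_ i).2) m = (a_ (n + i) (odd n)%:R).1 m.
Proof.
move=> n_gt0 i_gt0 m le_m_ni; set N := (n + i).+1.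
suff agree_N : agree N (trunc N (ps_mul (ps_geom n) (ps_comp (a_ n 1).1 (e_ i).2)))
                       (trunc N (a_ (n + i) (odd n)%:R).1).
  by have := agree_N m le_m_ni; rewrite !coef_trunc.
have trunc_u : agree N (trunc N (a_ n 1).1) (1 + 'X^n).
  by rewrite -[X in _ + X]scale1r; apply: trunc_a.
have geom_inv : agree N (trunc N (ps_geom n) * (1 + 'X^n)) 1.
  rewrite mulrC; apply: agree_trans (agreeM (agree_sym trunc_u) (agree_refl _ _)) _.
  apply: agree_trans (agree_sym (trunc_mul _ _ _)) _.
  by rewrite ps_mul_geom //; apply: trunc_one.
have geom0 : (trunc N (ps_geom n))`_0 = 1 by rewrite coef_trunc // /ps_geom dvdn0.
apply: agree_trans (trunc_mul _ _ _) _.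
apply: agree_trans (agreeM (agree_refl _ _) (trunc_comp _ _ _ (coef0_e i))) _.
apply: agree_trans (agreeM (agree_refl _ _)
  (agree_comp trunc_u (trunc_e _ _) (trunc_coef0 _ _ (coef0_e i)))) _.
apply: agree_trans (agree_inv1Xn_comp _ _ _ i_gt0 geom0 geom_inv) _.
by rewrite (natr_F2 n); apply/agree_sym/trunc_a.
Qed.

Theorem lemma9 (n i : nat) (hn : (1 <= n)%N) (hi : (1 <= i)%N) :
  in_appell (rcomm (a_ n 1) (rinv (e_ i))) /\
  (forall m : nat, (m <= n + i)%N ->
     (rcomm (a_ n 1) (rinv (e_ i))).1 m = (a_ (n + i) ((odd n)%:R : F2)).1 m).
Proof.
have geom0 : ps_geom n 0%N = 1 by rewrite /ps_geom dvdn0.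
have -> : rcomm (a_ n 1) (rinv (e_ i)) =
          (ps_mul (ps_geom n) (ps_comp (a_ n 1).1 (e_ i).2), ps_t).
  exact: rcomm_appell_lagrange (coef0_a n 1 hn) geom0 (ps_mul_geom n hn)
                               (coef0_e i) (coef1_e i hi).
split; last exact: commutator_coef.
split=> //; split=> //=.
by rewrite (commutator_coef hn hi 0) // coef0_a // addn_gt0 hn.
Qed.
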